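(* Let $S\in(0,1)$, $f_S,f_C,h_S,h_C>0$ and $\lambda_S,\lambda_C>0$. Put $A_S=\lambda_S/f_S$ and $A_C=\lambda_C/h_C$. The planar system \[ SB'=f_S\,(SB+A_S)(S-SB)-h_S\,CR\cdot SB,\qquad CR'=f_C\,CR\,(1-S-CR)-h_C\,(SB+A_C)\,CR \] has no limit cycle (no nonconstant periodic orbit) contained in the open rectangle $(0,S)\times(0,1-S)$.
   Context: Armed-revolt model with direct foreign intervention on Blue's side. A population of total size $1$ is split into a fixed fraction $S$ of supporters of Blue and $1-S$ of contrarians. $SB$ and $CR$ are the fractions of the total population that are supporters controlled by Blue and contrarians controlled by Red. The remaining fractions are $SR=S-SB$ and $CB=1-S-CR$. The full dynamics are $SB'=f_S\,SB\cdot SR-h_S\,CR\cdot SB+\lambda_S\,SR$, $SR'=-SB'$, $CR'=f_C\,CR\cdot CB-h_C\,SB\cdot CR-\lambda_C\,CR$, $CB'=-CR'$. The constants $\lambda_S,\lambda_C$ are the combat powers of the foreign force. These dynamics reduce to the planar system in the claim. *)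

From Stdlib Require Import Reals Lra.
Open Scope R_scope.

(* Right-hand side of the planar system, with A_S = lambda_S / f_S and
   A_C = lambda_C / h_C. *)
Definition SB_rhs (S fS hS lamS : R) (sb cr : R) : R :=
  fS * (sb + lamS / fS) * (S - sb) - hS * cr * sb.

Definition CR_rhs (S fC hC lamC : R) (sb cr : R) : R :=
  fC * cr * (1 - S - cr) - hC * (sb + lamC / hC) * cr.

Definition is_solution (S fS fC hS hC lamS lamC : R) (sb cr : R -> R) : Prop :=
  forall t : R,
    derivable_pt_lim sb t (SB_rhs S fS hS lamS (sb t) (cr t)) /\
    derivable_pt_lim cr t (CR_rhs S fC hC lamC (sb t) (cr t)).

(* Along a solution write p = SB' and q = CR' for the velocity.
   Differentiating the equations shows that (p, q) solves the linearised
   system p' = a p + b q, q' = c p + d q, whose coefficients are the entries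
   of the Jacobian of the vector field along the orbit.  In the open
   rectangle the off-diagonal entries b = -h_S SB and c = -h_C CR are
   negative (the system is competitive) and all entries are bounded.

   Two general facts then exclude a nonconstant periodic orbit:
   - if the velocity vanishes at one time, Gronwall's inequality applied to
     E = p^2 + q^2 (|E'| <= K E) makes it vanish at all times;
   - otherwise w = p q satisfies w' = (a + d) w + b q^2 + c p^2 < 0 at each
     zero of w, so w can only cross 0 downwards; a T-periodic function with
     this property never vanishes, yet SB(T) = SB(0) forces p, hence w, to
     vanish somewhere (Rolle). *)
From Stdlib Require Import Reals Lra Psatz Classical.
Open Scope R_scope.

(* Pointwise forms of the derivative rules, avoiding the plus_fct/mult_fct
   combinators of the Stdlib statements. *)

Lemma derivable_pt_lim_eq_val f t l l' :
  derivable_pt_lim f t l -> l = l' -> derivable_pt_lim f t l'.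
Proof. now intros H <-. Qed.

Lemma derivable_pt_lim_add f g t df dg :
  derivable_pt_lim f t df -> derivable_pt_lim g t dg ->
  derivable_pt_lim (fun u => f u + g u) t (df + dg).
Proof. now apply derivable_pt_lim_plus. Qed.

Lemma derivable_pt_lim_sub f g t df dg :
  derivable_pt_lim f t df -> derivable_pt_lim g t dg ->
  derivable_pt_lim (fun u => f u - g u) t (df - dg).
Proof. now apply derivable_pt_lim_minus. Qed.

Lemma derivable_pt_lim_mul f g t df dg :
  derivable_pt_lim f t df -> derivable_pt_lim g t dg ->
  derivable_pt_lim (fun u => f u * g u) t (df * g t + f t * dg).
Proof. now apply derivable_pt_lim_mult. Qed.

Lemma derivable_pt_lim_cst k t : derivable_pt_lim (fun _ => k) t 0.
Proof. apply derivable_pt_lim_const. Qed.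

Lemma derivable_pt_lim_exp_lin K t :
  derivable_pt_lim (fun u => exp (K * u)) t (exp (K * t) * K).
Proof.
  apply (derivable_pt_lim_comp (fun u => K * u) exp t K).
  - apply (derivable_pt_lim_eq_val _ _ (0 * t + K * 1)); [|ring].
    apply derivable_pt_lim_mul; [apply derivable_pt_lim_cst | apply derivable_pt_lim_id].
  - apply derivable_pt_lim_exp.
Qed.

Lemma nondecreasing_of_deriv_nonneg (f f' : R -> R) a b :
  (forall t, derivable_pt_lim f t (f' t)) -> (forall t, 0 <= f' t) ->
  a <= b -> f a <= f b.
Proof.
  intros Hd Hpos Hab.
  destruct (Req_dec a b) as [<- | Hne]; [lra|].
  destruct (MVT_cor2 f f' a b ltac:(lra) (fun c _ => Hd c)) as [c [Hc _]].
  specialize (Hpos c). nra.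
Qed.

Lemma constant_of_zero_deriv (f : R -> R) :
  (forall t, derivable_pt_lim f t 0) -> forall t, f t = f 0.
Proof.
  intros Hd t.
  destruct (Rtotal_order t 0) as [Hlt | [-> | Hgt]]; [| reflexivity |].
  - destruct (MVT_cor2 f (fun _ => 0) t 0 Hlt (fun c _ => Hd c)) as [c [Hc _]].
    lra.
  - destruct (MVT_cor2 f (fun _ => 0) 0 t Hgt (fun c _ => Hd c)) as [c [Hc _]].
    lra.
Qed.

Lemma rolle_zero (f f' : R -> R) a b :
  a < b -> (forall t, derivable_pt_lim f t (f' t)) -> f a = f b ->
  exists c, a < c < b /\ f' c = 0.
Proof.
  intros Hab Hd Heq.
  destruct (MVT_cor2 f f' a b Hab (fun c _ => Hd c)) as [c [Hc Hin]].
  exists c. split; [exact Hin|].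
  rewrite Heq, Rminus_diag in Hc. nra.
Qed.

Lemma derivable_pt_lim_continuous f t l :
  derivable_pt_lim f t l -> forall eps, 0 < eps ->
  exists d, 0 < d /\ forall y, Rabs (y - t) < d -> Rabs (f y - f t) < eps.
Proof.
  intros H eps Heps.
  destruct (derivable_continuous_pt f t (exist _ l H) eps Heps) as [d [Hd Hy]].
  exists d. split; [exact Hd|].
  intros y Hyt. destruct (Req_dec y t) as [-> | Hne].
  - rewrite Rminus_diag, Rabs_R0. exact Heps.
  - apply (Hy y). split; [split; [exact I | auto] | exact Hyt].
Qed.

Lemma strict_decrease_near f s d :
  derivable_pt_lim f s d -> d < 0 -> forall eta, 0 < eta ->
  exists h, 0 < h < eta /\ f (s + h) < f s /\ f s < f (s - h).
Proof.
  intros H Hd eta Heta.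
  destruct (H (- d / 2)) as [del Hdel]; [lra|].
  pose proof (cond_pos del) as Hdel0.
  set (h := Rmin (del / 2) (eta / 2)).
  assert (Hh0 : 0 < h) by (apply Rmin_glb_lt; lra).
  assert (Hh1 : h <= del / 2) by apply Rmin_l.
  assert (Hh2 : h <= eta / 2) by apply Rmin_r.
  exists h. split; [lra|].
  pose proof (Hdel h ltac:(lra) ltac:(rewrite Rabs_pos_eq; lra)) as Hright.
  pose proof (Hdel (- h) ltac:(lra) ltac:(rewrite Rabs_Ropp, Rabs_pos_eq; lra))
    as Hleft.
  apply Rabs_def2 in Hright. apply Rabs_def2 in Hleft.
  replace (s + - h) with (s - h) in Hleft by ring.
  set (r1 := (f (s + h) - f s) / h) in Hright.
  set (r2 := (f (s - h) - f s) / - h) in Hleft.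
  assert (E1 : f (s + h) - f s = r1 * h) by (unfold r1; field; lra).
  assert (E2 : f (s - h) - f s = r2 * - h) by (unfold r2; field; lra).
  split; nra.
Qed.

(* Proof: at s = sup {t in [a, b] | w t < 0} the
   value w s can be neither negative (w stays negative a bit longer), nor
   positive (w is positive just before s), nor zero (w is negative just
   after s). *)
Lemma no_upward_crossing (w w' : R -> R) a b :
  a < b -> (forall t, derivable_pt_lim w t (w' t)) ->
  (forall t, w t = 0 -> w' t < 0) ->
  w a < 0 -> 0 < w b -> False.
Proof.
  intros Hab Hd Hzero Ha Hb.
  set (Neg := fun t => a <= t <= b /\ w t < 0).
  destruct (completeness Neg) as [s [Hub Hlub]].
  { exists b. intros t [Ht _]. lra. }
  { exists a. split; [lra | exact Ha]. }
  assert (Has : a <= s) by (apply Hub; split; [lra | exact Ha]).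
  assert (Hsb : s <= b) by (apply Hlub; intros t [Ht _]; lra).
  destruct (Rtotal_order (w s) 0) as [Hneg | [Hz | Hpos]].
  - assert (Hsb' : s < b) by (destruct (Req_dec s b) as [-> |]; lra).
    destruct (derivable_pt_lim_continuous _ _ _ (Hd s) (- w s)) as [d [Hd0 Hc]];
      [lra|].
    set (t := Rmin (s + d / 2) b).
    assert (Ht1 : s < t) by (apply Rmin_glb_lt; lra).
    assert (Ht2 : t <= s + d / 2) by apply Rmin_l.
    assert (Ht3 : t <= b) by apply Rmin_r.
    assert (Hnt : Neg t).
    { split; [lra|].
      pose proof (Hc t ltac:(rewrite Rabs_pos_eq; lra)) as Hct.
      apply Rabs_def2 in Hct. lra. }
    pose proof (Hub t Hnt). lra.
  - assert (Has' : a < s) by (destruct (Req_dec s a) as [-> |]; lra).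
    assert (Hsb' : s < b) by (destruct (Req_dec s b) as [-> |]; lra).
    destruct (strict_decrease_near w s (w' s) (Hd s) (Hzero s Hz) (b - s))
      as [h [Hh [Hdec _]]]; [lra|].
    pose proof (Hub (s + h) ltac:(split; lra)). lra.
  - destruct (derivable_pt_lim_continuous _ _ _ (Hd s) (w s)) as [d [Hd0 Hc]];
      [lra|].
    assert (Hub' : is_upper_bound Neg (s - d / 2)).
    { intros t [Ht Hwt]. destruct (Rle_lt_dec t (s - d / 2)) as [| Hlt]; [lra|].
      assert (Hts : t <= s) by (apply Hub; split; assumption).
      pose proof (Hc t ltac:(rewrite Rabs_left1; lra)) as Hct.
      apply Rabs_def2 in Hct. lra. }
    pose proof (Hlub _ Hub'). lra.
Qed.

(* A periodic function that crosses zero only downwards never vanishes: after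
   a zero at t it is negative, but just before the zero at t + T it is
   positive. *)
Lemma periodic_downward_crossing_nonzero (w w' : R -> R) T :
  0 < T -> (forall t, derivable_pt_lim w t (w' t)) ->
  (forall t, w t = 0 -> w' t < 0) -> (forall t, w (t + T) = w t) ->
  forall t, w t <> 0.
Proof.
  intros HT Hd Hzero Hper t Ht.
  destruct (strict_decrease_near w t (w' t) (Hd t) (Hzero t Ht) (T / 2))
    as [h1 [Hh1 [Hafter _]]]; [lra|].
  assert (HtT : w (t + T) = 0) by (rewrite Hper; exact Ht).
  destruct (strict_decrease_near w (t + T) (w' (t + T)) (Hd _) (Hzero _ HtT) (T / 2))
    as [h2 [Hh2 [_ Hbefore]]]; [lra|].
  apply (no_upward_crossing w w' (t + h1) (t + T - h2)); auto; lra.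
Qed.

(* Before t1, E(u) e^(K u) is
   nondecreasing; after t1, -E(u) e^(-K u) is nondecreasing. *)
Lemma gronwall_zero (E E' : R -> R) K t1 :
  (forall t, derivable_pt_lim E t (E' t)) -> (forall t, 0 <= E t) ->
  (forall t, Rabs (E' t) <= K * E t) -> E t1 = 0 -> forall t, E t = 0.
Proof.
  intros Hd Hnn Hbound Ht1 t.
  assert (Hslope : forall u, - (K * E u) <= E' u <= K * E u).
  { intro u. pose proof (Hbound u). pose proof (Rle_abs (E' u)).
    pose proof (Rle_abs (- E' u)). rewrite Rabs_Ropp in *. lra. }
  destruct (Rle_lt_dec t t1) as [Hle | Hgt].
  - pose proof (nondecreasing_of_deriv_nonneg (fun u => E u * exp (K * u))
      (fun u => E' u * exp (K * u) + E u * (exp (K * u) * K)) t t1) as Hmono.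
    assert (Hexp := exp_pos (K * t)). pose proof (Hnn t).
    enough (E t * exp (K * t) <= E t1 * exp (K * t1)) by (rewrite Ht1 in *; nra).
    apply Hmono; [| | exact Hle].
    + intro u. apply (derivable_pt_lim_mul E (fun v => exp (_ * v)));
        [apply Hd | apply derivable_pt_lim_exp_lin].
    + intro u. pose proof (exp_pos (K * u)). pose proof (Hslope u). nra.
  - pose proof (nondecreasing_of_deriv_nonneg (fun u => 0 - E u * exp (- K * u))
      (fun u => 0 - (E' u * exp (- K * u) + E u * (exp (- K * u) * - K))) t1 t)
      as Hmono.
    assert (Hexp := exp_pos (- K * t)). pose proof (Hnn t).
    enough (0 - E t1 * exp (- K * t1) <= 0 - E t * exp (- K * t))
      by (rewrite Ht1 in *; nra).
    apply Hmono; [| | lra].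
    + intro u. apply derivable_pt_lim_sub; [apply derivable_pt_lim_cst|].
      apply (derivable_pt_lim_mul E (fun v => exp (_ * v)));
        [apply Hd | apply derivable_pt_lim_exp_lin].
    + intro u. pose proof (exp_pos (- K * u)). pose proof (Hslope u). nra.
Qed.

(* The quadratic form v . (J v) of a matrix J with entries bounded by M is
   bounded by 2 M |v|^2, using 2 |p q| <= p^2 + q^2. *)
Lemma quadratic_form_bound a b c d p q M :
  Rabs a <= M -> Rabs b <= M -> Rabs c <= M -> Rabs d <= M ->
  Rabs (p * (a * p + b * q) + q * (c * p + d * q)) <= 2 * M * (p * p + q * q).
Proof.
  intros Ha Hb Hc Hd.
  assert (Hpq : 2 * Rabs (p * q) <= p * p + q * q).
  { rewrite Rabs_mult.
    pose proof (Rsqr_abs p). pose proof (Rsqr_abs q). unfold Rsqr in *.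
    pose proof (pow2_ge_0 (Rabs p - Rabs q)). nra. }
  replace (p * (a * p + b * q) + q * (c * p + d * q))
    with (a * (p * p) + (b + c) * (p * q) + d * (q * q)) by ring.
  eapply Rle_trans; [apply Rabs_triang|].
  eapply Rle_trans; [apply Rplus_le_compat_r, Rabs_triang|].
  rewrite !(Rabs_mult _ (_ * _)), (Rabs_pos_eq (p * p)), (Rabs_pos_eq (q * q))
    by apply Rle_0_sqr.
  pose proof (Rle_0_sqr p) as Hp2. pose proof (Rle_0_sqr q) as Hq2.
  unfold Rsqr in *.
  assert (Hbc : Rabs (b + c) <= 2 * M) by (pose proof (Rabs_triang b c); lra).
  assert (HM : 0 <= M) by (pose proof (Rabs_pos a); lra).
  pose proof (Rmult_le_compat_r (p * p) _ _ Hp2 Ha).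
  pose proof (Rmult_le_compat_r (q * q) _ _ Hq2 Hd).
  pose proof (Rmult_le_compat_r (Rabs (p * q)) _ _ (Rabs_pos (p * q)) Hbc).
  pose proof (Rmult_le_compat_l M _ _ HM Hpq).
  lra.
Qed.

(* At a zero of p q the derivative of p q along the linear system
   p' = a p + b q, q' = c p + d q equals b q^2 + c p^2, which is negative
   when b, c < 0 and (p, q) <> 0. *)
Lemma competitive_cross_deriv_neg a b c d p q :
  b < 0 -> c < 0 -> p * q = 0 -> 0 < p * p + q * q ->
  (a * p + b * q) * q + p * (c * p + d * q) < 0.
Proof.
  intros Hb Hc Hpq Hv.
  replace ((a * p + b * q) * q + p * (c * p + d * q))
    with ((a + d) * (p * q) + b * (q * q) + c * (p * p)) by ring.
  rewrite Hpq. pose proof (Rle_0_sqr p). pose proof (Rle_0_sqr q).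
  unfold Rsqr in *.
  pose proof (Rmult_le_compat_neg_l b 0 (q * q) ltac:(lra) ltac:(lra)).
  pose proof (Rmult_le_compat_neg_l c 0 (p * p) ltac:(lra) ltac:(lra)).
  destruct (Req_dec (p * p) 0) as [Hp0 | Hp0].
  - pose proof (Rmult_lt_gt_compat_neg_l b 0 (q * q) Hb ltac:(lra)). lra.
  - pose proof (Rmult_lt_gt_compat_neg_l c 0 (p * p) Hc ltac:(lra)). lra.
Qed.

Section CompetitivePlanarVelocity.

Variables (p q a b c d : R -> R) (M : R).

Hypothesis p_deriv : forall t, derivable_pt_lim p t (a t * p t + b t * q t).
Hypothesis q_deriv : forall t, derivable_pt_lim q t (c t * p t + d t * q t).
Hypothesis coef_bounded : forall t,
  Rabs (a t) <= M /\ Rabs (b t) <= M /\ Rabs (c t) <= M /\ Rabs (d t) <= M.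
Hypothesis competitive : forall t, b t < 0 /\ c t < 0.

(* Uniqueness for the linear system: a velocity that vanishes once vanishes
   always (Gronwall applied to p^2 + q^2). *)
Lemma velocity_zero_propagates t1 :
  p t1 = 0 -> q t1 = 0 -> forall t, p t = 0 /\ q t = 0.
Proof.
  intros Hp1 Hq1.
  assert (Henergy : forall t, p t * p t + q t * q t = 0).
  { apply (gronwall_zero _
      (fun t => 2 * (p t * (a t * p t + b t * q t) + q t * (c t * p t + d t * q t)))
      (4 * M) t1).
    - intro t.
      apply (derivable_pt_lim_eq_val _ _
        ((a t * p t + b t * q t) * p t + p t * (a t * p t + b t * q t)
         + ((c t * p t + d t * q t) * q t + q t * (c t * p t + d t * q t))));
        [| ring].
      apply derivable_pt_lim_add; apply derivable_pt_lim_mul; auto.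
    - intro t. pose proof (Rle_0_sqr (p t)). pose proof (Rle_0_sqr (q t)).
      unfold Rsqr in *. lra.
    - intro t. destruct (coef_bounded t) as [Ha [Hb [Hc Hd]]].
      rewrite Rabs_mult, Rabs_pos_eq by lra.
      pose proof (quadratic_form_bound _ _ _ _ (p t) (q t) M Ha Hb Hc Hd). lra.
    - rewrite Hp1, Hq1. ring. }
  intro t. specialize (Henergy t).
  pose proof (Rle_0_sqr (p t)). pose proof (Rle_0_sqr (q t)).
  unfold Rsqr in *. split; nra.
Qed.

(* Main dichotomy: if the velocity never vanishes, p q has only downward
   zero crossings, so by periodicity it never vanishes; but p = x' and
   x (T) = x (0), so p has a zero by Rolle. *)
Lemma periodic_competitive_velocity_vanishes (x : R -> R) T :
  0 < T -> (forall t, derivable_pt_lim x t (p t)) -> x T = x 0 ->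
  (forall t, p (t + T) = p t /\ q (t + T) = q t) ->
  forall t, p t = 0 /\ q t = 0.
Proof.
  intros HT Hx HxT Hper.
  destruct (classic (exists t1, p t1 = 0 /\ q t1 = 0)) as [[t1 [Hp1 Hq1]] | Hnz].
  { exact (velocity_zero_propagates t1 Hp1 Hq1). }
  exfalso.
  assert (Hmoving : forall t, 0 < p t * p t + q t * q t).
  { intro t. pose proof (Rle_0_sqr (p t)). pose proof (Rle_0_sqr (q t)).
    unfold Rsqr in *.
    destruct (Req_dec (p t) 0) as [Hp0 | Hp0]; [destruct (Req_dec (q t) 0) as [Hq0 | Hq0]|].
    - exfalso. apply Hnz. exists t. auto.
    - pose proof (Rsqr_pos_lt _ Hq0). unfold Rsqr in *. lra.
    - pose proof (Rsqr_pos_lt _ Hp0). unfold Rsqr in *. lra. }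
  assert (Hprod_nz : forall t, p t * q t <> 0).
  { apply (periodic_downward_crossing_nonzero (fun t => p t * q t)
      (fun t => (a t * p t + b t * q t) * q t + p t * (c t * p t + d t * q t)) T HT).
    - intro t. apply derivable_pt_lim_mul; auto.
    - intros t Hz. destruct (competitive t).
      apply competitive_cross_deriv_neg; auto.
    - intro t. destruct (Hper t) as [-> ->]. reflexivity. }
  destruct (rolle_zero x p 0 T HT Hx (eq_sym HxT)) as [t0 [_ Hp0]].
  apply (Hprod_nz t0). rewrite Hp0. ring.
Qed.

End CompetitivePlanarVelocity.

Definition jac_SS (S fS hS lamS sb cr : R) : R :=
  fS * (S - sb) - fS * (sb + lamS / fS) - hS * cr.
Definition jac_SC (hS sb : R) : R := - hS * sb.
Definition jac_CS (hC cr : R) : R := - hC * cr.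
Definition jac_CC (S fC hC lamC sb cr : R) : R :=
  fC * (1 - S - cr) - fC * cr - hC * (sb + lamC / hC).

Lemma solution_velocity_deriv S fS fC hS hC lamS lamC sb cr :
  is_solution S fS fC hS hC lamS lamC sb cr -> forall t,
  derivable_pt_lim (fun u => SB_rhs S fS hS lamS (sb u) (cr u)) t
    (jac_SS S fS hS lamS (sb t) (cr t) * SB_rhs S fS hS lamS (sb t) (cr t)
     + jac_SC hS (sb t) * CR_rhs S fC hC lamC (sb t) (cr t)) /\
  derivable_pt_lim (fun u => CR_rhs S fC hC lamC (sb u) (cr u)) t
    (jac_CS hC (cr t) * SB_rhs S fS hS lamS (sb t) (cr t)
     + jac_CC S fC hC lamC (sb t) (cr t) * CR_rhs S fC hC lamC (sb t) (cr t)).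
Proof.
  intros Hsol t. destruct (Hsol t) as [Hsb Hcr].
  unfold SB_rhs, CR_rhs. split; eapply derivable_pt_lim_eq_val.
  - repeat first [ eassumption | apply derivable_pt_lim_cst
                 | apply derivable_pt_lim_sub | apply derivable_pt_lim_add
                 | apply derivable_pt_lim_mul ].
  - unfold jac_SS, jac_SC, SB_rhs, CR_rhs. ring.
  - repeat first [ eassumption | apply derivable_pt_lim_cst
                 | apply derivable_pt_lim_sub | apply derivable_pt_lim_add
                 | apply derivable_pt_lim_mul ].
  - unfold jac_CS, jac_CC, SB_rhs, CR_rhs. ring.
Qed.

Lemma jacobian_bounded S fS fC hS hC lamS lamC sb cr :
  0 < fS -> 0 < fC -> 0 < hS -> 0 < hC -> 0 < lamS / fS -> 0 < lamC / hC ->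
  0 < sb < S -> 0 < cr < 1 - S ->
  let M := fS * (S + lamS / fS) + hS + fC + hC * (1 + lamC / hC) in
  Rabs (jac_SS S fS hS lamS sb cr) <= M /\ Rabs (jac_SC hS sb) <= M /\
  Rabs (jac_CS hC cr) <= M /\ Rabs (jac_CC S fC hC lamC sb cr) <= M.
Proof.
  intros HfS HfC HhS HhC HAS HAC [Hsb0 Hsb1] [Hcr0 Hcr1] M.
  unfold M, jac_SS, jac_SC, jac_CS, jac_CC.
  set (AS := lamS / fS) in *. set (AC := lamC / hC) in *.
  repeat split; apply Rabs_le; split; nra.
Qed.

Theorem proposition2 (S fS fC hS hC lamS lamC : R)
  (HS0 : 0 < S) (HS1 : S < 1)
  (HfS : 0 < fS) (HfC : 0 < fC) (HhS : 0 < hS) (HhC : 0 < hC)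
  (HlS : 0 < lamS) (HlC : 0 < lamC)
  (sb cr : R -> R) (T : R) (HT : 0 < T)
  (Hsol : is_solution S fS fC hS hC lamS lamC sb cr)
  (Hper : forall t : R, sb (t + T) = sb t /\ cr (t + T) = cr t)
  (Hbox : forall t : R, 0 < sb t < S /\ 0 < cr t < 1 - S) :
  forall t : R, sb t = sb 0 /\ cr t = cr 0.
Proof.
  set (p := fun t => SB_rhs S fS hS lamS (sb t) (cr t)).
  set (q := fun t => CR_rhs S fC hC lamC (sb t) (cr t)).
  assert (Hvel : forall t, p t = 0 /\ q t = 0).
  { apply (periodic_competitive_velocity_vanishes p q
      (fun t => jac_SS S fS hS lamS (sb t) (cr t)) (fun t => jac_SC hS (sb t))
      (fun t => jac_CS hC (cr t)) (fun t => jac_CC S fC hC lamC (sb t) (cr t))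
      (fS * (S + lamS / fS) + hS + fC + hC * (1 + lamC / hC)))
      with (x := sb) (T := T).
    - intro t. apply (solution_velocity_deriv _ _ _ _ _ _ _ _ _ Hsol t).
    - intro t. apply (solution_velocity_deriv _ _ _ _ _ _ _ _ _ Hsol t).
    - intro t. destruct (Hbox t) as [Hsbt Hcrt].
      apply jacobian_bounded; auto; apply Rdiv_lt_0_compat; assumption.
    - intro t. destruct (Hbox t) as [[Hsbt _] [Hcrt _]].
      unfold jac_SC, jac_CS. split; nra.
    - exact HT.
    - intro t. apply (Hsol t).
    - rewrite <- (Rplus_0_l T). apply (Hper 0).
    - intro t. unfold p, q. destruct (Hper t) as [-> ->]. auto. }
  intro t. split; apply constant_of_zero_deriv; intro u;
    destruct (Hsol u) as [Hsb Hcr]; destruct (Hvel u) as [Hp Hq].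
  - rewrite <- Hp. exact Hsb.
  - rewrite <- Hq. exact Hcr.
Qed.
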